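(* Let $k\ge 4$ be an integer and let $\Sigma$ be an alphabet with $|\Sigma|=l$. If $l\le 1$, then for every antimorphic involution $\theta$ on $\Sigma^*$ there is no infinite word over $\Sigma$ that is pseudo-$k$th-power-free with respect to $\theta$. If $l\ge 3$, then for every antimorphic involution $\theta$ on $\Sigma^*$ there exists an infinite word over $\Sigma$ that is pseudo-$k$th-power-free with respect to $\theta$. If $l=2$, the existence depends on the involution: there exists a pseudo-$k$th-power-free infinite word over $\Sigma$ with respect to one antimorphic involution of $\Sigma^*$ but not with respect to another.
   Context: A function $\theta:\Sigma^*\to\Sigma^*$ is an antimorphic involution if $\theta(uv)=\theta(v)\theta(u)$ and $\theta(\theta(w))=w$ for all words $u,v,w$. For an integer $k\ge 2$, a nonempty word $w$ is a pseudo $k$th power with respect to $\theta$ if $w=u_1u_2\cdots u_k$ where for all $1\le i,j\le k$, either $u_i=u_j$ or $u_i=\theta(u_j)$. A (finite or infinite) word is pseudo-$k$th-power-free with respect to $\theta$ if none of its factors (contiguous subwords) is a pseudo $k$th power with respect to $\theta$. *)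

From mathcomp Require Import all_boot.
Set Implicit Arguments. Unset Strict Implicit. Unset Printing Implicit Defensive.

Definition antimorphic_involution (Sigma : Type) (theta : seq Sigma -> seq Sigma) : Prop :=
  (forall u v : seq Sigma, theta (u ++ v) = theta v ++ theta u) /\
  (forall w : seq Sigma, theta (theta w) = w).

Definition pseudo_kth_power (Sigma : Type) (theta : seq Sigma -> seq Sigma)
    (k : nat) (w : seq Sigma) : Prop :=
  w <> [::] /\
  exists us : seq (seq Sigma),
    size us = k /\ flatten us = w /\
    forall i j, i < k -> j < k ->
      nth [::] us i = nth [::] us j \/ nth [::] us i = theta (nth [::] us j).

Definition factor (Sigma : Type) (x : nat -> Sigma) (i n : nat) : seq Sigma :=
  mkseq (fun j => x (i + j)) n.

Definition pseudo_kth_power_free (Sigma : Type) (theta : seq Sigma -> seq Sigma)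
    (k : nat) (x : nat -> Sigma) : Prop :=
  forall i n, ~ pseudo_kth_power theta k (factor x i n).

From mathcomp Require Import all_boot zify.
Set Implicit Arguments. Unset Strict Implicit. Unset Printing Implicit Defensive.

(* The blocks of a pseudo k-th power (k >= 4) are all u or theta u, and its first
   four blocks always contain a square: u u, theta u theta u, or (u theta u)^2.
   So over three letters a square-free infinite word works for every theta; we
   take the fixed point of Leech's 13-uniform square-free morphism.  Square-freeness
   of uniform images is proved in the classical way: short squares are excluded by
   a finite check, and for long squares a synchronization property (again checked
   on short words) forces the period to be a multiple of the block length, after
   which injectivity and a rigidity condition at the block cuts pull the square
   back to the preimage.  The same argument shows that the binary image of the
   Leech word under 0 -> 00010, 1 -> 00101, 2 -> 00111 has no four consecutive
   blocks each equal to the first one or to its reversal, so it is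
   pseudo-k-th-power-free for the reversal.  For the involution exchanging the two
   letters, as over a one-letter alphabet, any k letters form a pseudo k-th power. *)

Section Blocks.
Variable T : Type.
Implicit Types z u a b c : seq T.

(* Truncated when i + n > size z: the size tests in [square_word] and
   [pseudo_fourth_word] rule out such factors. *)
Definition block z i n := take n (drop i z).

Lemma size_block z i n : size (block z i n) = minn n (size z - i).
Proof. by rewrite size_take_min size_drop. Qed.

Lemma blockD z i n1 n2 : block z i (n1 + n2) = block z i n1 ++ block z (i + n1) n2.
Proof. by rewrite /block takeD drop_drop addnC. Qed.

Lemma block_block z j n i l : i + l <= n -> block (block z j n) i l = block z (j + i) l.
Proof.
move=> le_iln; rewrite /block !take_drop drop_drop take_takel; last lia.
by rewrite (addnC i j) -addnA (addnC i j).
Qed.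

Lemma block_drop z j i n : block (drop j z) i n = block z (j + i) n.
Proof. by rewrite /block drop_drop addnC. Qed.

Lemma block_take z l i n : i + n <= l -> block (take l z) i n = block z i n.
Proof. by move=> fits; rewrite -[z in take l z]drop0 -/(block z 0 l) block_block. Qed.

Lemma take_block z i n l : n <= l -> take n (block z i l) = block z i n.
Proof. by move=> le_nl; rewrite /block take_takel. Qed.

Lemma block_cat a b c : block (a ++ b ++ c) (size a) (size b) = b.
Proof. by rewrite /block drop_size_cat // take_size_cat. Qed.

Lemma block_cons x0 z j n : j < size z -> block z j n.+1 = nth x0 z j :: block z j.+1 n.
Proof. by move=> lt_jz; rewrite /block (drop_nth x0 lt_jz). Qed.

Lemma block_rcons x0 z j n : j + n < size z ->
  block z j n.+1 = rcons (block z j n) (nth x0 z (j + n)).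
Proof. by move=> lt_jnz; rewrite /block (take_nth x0) ?nth_drop // size_drop; lia. Qed.

End Blocks.

Lemma map_block (T T' : Type) (f : T -> T') z i n : map f (block z i n) = block (map f z) i n.
Proof. by rewrite /block map_take map_drop. Qed.

Section Squares.
Variable T : eqType.
Implicit Types z u : seq T.

Definition square_word u p := [&& 0 < p, size u == p + p & take p u == drop p u].
Definition square_at z i p := square_word (block z i (p + p)) p.
Definition squarefree z :=
  all (fun i => all (fun p => ~~ square_at z i p) (iota 1 (size z))) (iota 0 (size z)).

Lemma square_at_fits z i p : square_at z i p -> 0 < p /\ i + p + p <= size z.
Proof. by case/and3P=> p_gt0 /eqP; rewrite size_block; split=> //; lia. Qed.

Lemma square_atE z i p :
  square_at z i p = [&& 0 < p, i + p + p <= size z & block z i p == block z (i + p) p].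
Proof.
have [fits|] := leqP (i + p + p) (size z); last first.
  by move=> too_long; rewrite /= andbF; apply/negbTE/negP=> /square_at_fits; lia.
rewrite /square_at /square_word size_block (minn_idPl _); last lia.
rewrite eqxx blockD take_size_cat ?drop_size_cat // size_block; lia.
Qed.

Lemma squarefreeP z : reflect (forall i p, ~~ square_at z i p) (squarefree z).
Proof.
apply: (iffP idP) => [/allP sqf i p | nosq]; last first.
  by apply/allP=> i _; apply/allP=> p _; apply: nosq.
apply/negP=> sq; have [p_gt0 fits] := square_at_fits sq.
have /allP/(_ p) := sqf i ltac:(rewrite mem_iota; lia).
by rewrite mem_iota sq => /(_ ltac:(lia)).
Qed.

Lemma square_at_block z j n i p : square_at (block z j n) i p -> square_at z (j + i) p.
Proof.
move=> sq; have [_ fits] := square_at_fits sq; move: fits sq.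
by rewrite size_block /square_at => fits; rewrite block_block //; lia.
Qed.

Lemma squarefree_block z j n : squarefree z -> squarefree (block z j n).
Proof.
move=> /squarefreeP sqf; apply/squarefreeP=> i p; apply/negP.
by move/square_at_block; apply/negP.
Qed.

Lemma square_at_cat a u b : u != [::] -> square_at (a ++ u ++ u ++ b) (size a) (size u).
Proof.
move=> u_nil; rewrite /square_at /block drop_size_cat // catA take_size_cat ?size_cat //.
by rewrite /square_word size_cat lt0n size_eq0 u_nil take_size_cat // drop_size_cat // !eqxx.
Qed.

Lemma square_of_four_blocks u0 u1 u2 u3 r v :
  u0 != [::] -> size u1 = size u0 ->
  u1 \in [:: u0; v] -> u2 \in [:: u0; v] -> u3 \in [:: u0; v] ->
  exists i p, (size u0 <= p) && square_at (u0 ++ u1 ++ u2 ++ u3 ++ r) i p.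
Proof.
move=> u0_nil size_u1; rewrite !inE => /orP[/eqP eq10 _ _ | /eqP eq1v].
  by exists 0, (size u0); rewrite leqnn eq10 (square_at_cat [::]).
have u1_nil : u1 != [::] by rewrite -size_eq0 size_u1 size_eq0.
case/orP=> /eqP->; last first.
  by exists (size u0), (size u1); rewrite eq1v -eq1v (square_at_cat u0) // size_u1 leqnn.
case/orP=> /eqP->.
  by exists (size (u0 ++ u1)), (size u0); rewrite leqnn catA square_at_cat.
exists 0, (size (u0 ++ u1)); rewrite {1}size_cat leq_addr -eq1v.
have -> : u0 ++ u1 ++ u0 ++ u1 ++ r = [::] ++ (u0 ++ u1) ++ (u0 ++ u1) ++ r by rewrite !catA.
by rewrite (square_at_cat [::]) // -size_eq0 size_cat size_u1 addn_eq0 andbb size_eq0.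
Qed.

End Squares.

Lemma square_at_map (T T' : eqType) (f : T -> T') z i p :
  square_at z i p -> square_at (map f z) i p.
Proof.
rewrite /square_at -map_block /square_word size_map -map_take -map_drop.
by case/and3P=> -> -> /eqP ->; rewrite !eqxx.
Qed.

Section PseudoFourthPowers.
Variable (T : eqType) (f : seq T -> seq T).
Implicit Types z u : seq T.

Definition pseudo_fourth_word u m :=
  let u0 := take m u in
  [&& 0 < m, size u == 4 * m, block u m m \in [:: u0; f u0],
      block u (2 * m) m \in [:: u0; f u0] & block u (3 * m) m \in [:: u0; f u0]].
Definition pseudo_fourth_at z i m := pseudo_fourth_word (block z i (4 * m)) m.
Definition pseudo_fourth_free z :=
  all (fun i => all (fun m => ~~ pseudo_fourth_at z i m) (iota 1 (size z))) (iota 0 (size z)).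

Lemma pseudo_fourth_at_fits z i m : pseudo_fourth_at z i m -> 0 < m /\ i + 4 * m <= size z.
Proof. by case/and5P=> m_gt0 /eqP; rewrite size_block; split=> //; lia. Qed.

Lemma pseudo_fourth_freeP z :
  reflect (forall i m, ~~ pseudo_fourth_at z i m) (pseudo_fourth_free z).
Proof.
apply: (iffP idP) => [/allP pff i m | nopf]; last first.
  by apply/allP=> i _; apply/allP=> m _; apply: nopf.
apply/negP=> pf; have [m_gt0 fits] := pseudo_fourth_at_fits pf.
have /allP/(_ m) := pff i ltac:(rewrite mem_iota; lia).
by rewrite mem_iota pf => /(_ ltac:(lia)).
Qed.

Lemma pseudo_fourth_at_block z j n i m :
  pseudo_fourth_at (block z j n) i m -> pseudo_fourth_at z (j + i) m.
Proof.
move=> pf; have [_ fits] := pseudo_fourth_at_fits pf; move: fits pf.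
by rewrite size_block /pseudo_fourth_at => fits; rewrite block_block //; lia.
Qed.

Lemma pseudo_fourth_at_cat u0 u1 u2 u3 r :
  u0 != [::] -> [/\ size u1 = size u0, size u2 = size u0 & size u3 = size u0] ->
  [/\ u1 \in [:: u0; f u0], u2 \in [:: u0; f u0] & u3 \in [:: u0; f u0]] ->
  pseudo_fourth_at (u0 ++ u1 ++ u2 ++ u3 ++ r) 0 (size u0).
Proof.
move=> u0_nil [s1 s2 s3] [in1 in2 in3]; rewrite /pseudo_fourth_at.
have -> : block (u0 ++ u1 ++ u2 ++ u3 ++ r) 0 (4 * size u0) = u0 ++ u1 ++ u2 ++ u3.
  by rewrite /block drop0 !catA take_size_cat // !size_cat s1 s2 s3; lia.
rewrite /pseudo_fourth_word take_size_cat // lt0n size_eq0 u0_nil !size_cat s1 s2 s3.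
have -> : block (u0 ++ u1 ++ u2 ++ u3) (size u0) (size u0) = u1.
  by rewrite -[X in block _ _ X]s1 block_cat.
have -> : block (u0 ++ u1 ++ u2 ++ u3) (2 * size u0) (size u0) = u2.
  rewrite catA -[X in block _ _ X]s2 (_ : 2 * size u0 = size (u0 ++ u1)) ?block_cat //.
  by rewrite size_cat s1; lia.
have -> : block (u0 ++ u1 ++ u2 ++ u3) (3 * size u0) (size u0) = u3.
  rewrite -[X in block _ _ X]s3 (_ : 3 * size u0 = size (u0 ++ u1 ++ u2)).
    by rewrite !catA /block drop_size_cat ?take_size.
  by rewrite !size_cat s1 s2; lia.
by rewrite in1 in2 in3 /= !andbT; apply/eqP; lia.
Qed.

Lemma pseudo_fourth_word_square u m :
  pseudo_fourth_word u m -> exists i p, (m <= p) && square_at u i p.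
Proof.
case/and5P=> m_gt0 /eqP size_u in1 in2 in3.
have size_blocks j : j < 4 -> size (block u (j * m) m) = m.
  move=> lt_j4; rewrite size_block size_u; apply/minn_idPl.
  by rewrite -mulnBl leq_pmull // subn_gt0.
have -> : u = block u 0 m ++ block u m m ++ block u (2 * m) m ++ block u (3 * m) m ++ [::].
  rewrite cats0 {1}(_ : u = block u 0 (m + (m + (m + m)))).
    by rewrite !blockD add0n -addnA; congr (_ ++ _ ++ block u _ _ ++ block u _ _); lia.
  by rewrite /block drop0 take_oversize // size_u; lia.
have u0E : block u 0 m = take m u by rewrite /block drop0.
have u0_nil : block u 0 m != [::] by rewrite -size_eq0 (size_blocks 0) //; lia.
have size_u1 : size (block u m m) = size (block u 0 m).
  by rewrite -{1}(mul1n m) (size_blocks 1) // (size_blocks 0).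
rewrite -u0E in in1 in2 in3.
have [i [p /andP[le_p sq]]] := square_of_four_blocks [::] u0_nil size_u1 in1 in2 in3.
by exists i, p; rewrite sq andbT -(size_blocks 0).
Qed.

Lemma pseudo_fourth_square z i m :
  pseudo_fourth_at z i m -> exists i' p, (m <= p) && square_at z i' p.
Proof.
move=> /pseudo_fourth_word_square [i' [p /andP[le_mp sq]]].
by exists (i + i'), p; rewrite le_mp (square_at_block sq).
Qed.

End PseudoFourthPowers.

Lemma pseudo_fourth_at_map_rev (T T' : eqType) (f : T -> T') z i m :
  pseudo_fourth_at rev z i m -> pseudo_fourth_at rev (map f z) i m.
Proof.
rewrite /pseudo_fourth_at /pseudo_fourth_word -map_block size_map -map_take -map_rev.
rewrite -!map_block.
have mem_map2 (x a b : seq T) : x \in [:: a; b] -> map f x \in [:: map f a; map f b].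
  by rewrite !inE => /orP[]/eqP->; rewrite eqxx ?orbT.
by case/and5P=> -> -> /mem_map2 -> /mem_map2 -> /mem_map2 ->.
Qed.

Section PseudoPowers.
Variable T : eqType.
Variable theta : seq T -> seq T.
Hypothesis theta_inv : antimorphic_involution theta.

Lemma antimorphic_nil : theta [::] = [::].
Proof.
have [theta_cat _] := theta_inv; have /(congr1 size) := theta_cat [::] [::].
by rewrite cat0s size_cat; case: (theta [::]) => //= a s; lia.
Qed.

Lemma antimorphic_eq_nil u : (theta u == [::]) = (u == [::]).
Proof.
have [_ thetaK] := theta_inv; apply/eqP/eqP=> [|->]; last exact: antimorphic_nil.
by move=> u_nil; rewrite -(thetaK u) u_nil antimorphic_nil.
Qed.

Lemma size_antimorphic u : size (theta u) = size u.
Proof.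
have [theta_cat thetaK] := theta_inv.
have grow v : size v <= size (theta v).
  elim: v => //= a v IHv; rewrite -cat1s theta_cat size_cat.
  by rewrite -(addn1 (size v)) leq_add // lt0n size_eq0 antimorphic_eq_nil.
by apply/eqP; rewrite eqn_leq grow -{2}(thetaK u) grow.
Qed.

Lemma pseudo_power_split k w : 4 <= k -> pseudo_kth_power theta k w ->
  exists u0 u1 u2 u3 r, [/\ w = u0 ++ u1 ++ u2 ++ u3 ++ r, u0 != [::],
    u1 \in [:: u0; theta u0], u2 \in [:: u0; theta u0] & u3 \in [:: u0; theta u0]].
Proof.
move=> k_ge4 [w_nil [us [size_us [w_us like]]]]; subst w.
have like0 j : j < k -> nth [::] us j \in [:: nth [::] us 0; theta (nth [::] us 0)].
  by move=> lt_jk; rewrite !inE; case: (like j 0 lt_jk ltac:(lia)) => ->; rewrite eqxx ?orbT.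
have u0_nil : nth [::] us 0 != [::].
  apply/eqP=> u0_nil; apply: w_nil.
  have : all (pred1 [::]) us.
    apply/(all_nthP [::]) => j; rewrite size_us => /like0.
    by rewrite u0_nil antimorphic_nil !inE orbb.
  by elim: (us) => //= u vs IHvs /andP[/eqP-> /IHvs].
case: us w_nil size_us like like0 u0_nil => [|u0 [|u1 [|u2 [|u3 r]]]] //= _ size_us _ like0 u0_nil;
  try lia.
exists u0, u1, u2, u3, (flatten r).
by split; rewrite ?catA // ?(like0 1) ?(like0 2) ?(like0 3) //; lia.
Qed.

Lemma pseudo_power_square k w : 4 <= k -> pseudo_kth_power theta k w ->
  exists i p, square_at w i p.
Proof.
move=> k_ge4 /(pseudo_power_split k_ge4) [u0 [u1 [u2 [u3 [r [-> u0_nil in1 in2 in3]]]]]].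
have size_u1 : size u1 = size u0.
  by move: in1; rewrite !inE => /orP[]/eqP->; rewrite ?size_antimorphic.
have [i [p /andP[_ sq]]] := square_of_four_blocks r u0_nil size_u1 in1 in2 in3.
by exists i, p.
Qed.

End PseudoPowers.

Lemma rev_antimorphic_involution (T : Type) : antimorphic_involution (@rev T).
Proof. by split; [exact: rev_cat | exact: revK]. Qed.

Lemma pseudo_power_rev_fourth (T : eqType) k (w : seq T) : 4 <= k ->
  pseudo_kth_power (@rev T) k w -> exists m, pseudo_fourth_at rev w 0 m.
Proof.
move=> k_ge4 /(pseudo_power_split (rev_antimorphic_involution T) k_ge4).
case=> u0 [u1 [u2 [u3 [r [-> u0_nil in1 in2 in3]]]]]; exists (size u0).
have size_like v : v \in [:: u0; rev u0] -> size v = size u0.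
  by rewrite !inE => /orP[]/eqP->; rewrite ?size_rev.
by apply: (pseudo_fourth_at_cat _ u0_nil); split; rewrite ?size_like.
Qed.

Lemma no_pseudo_power_free_word (Sigma : Type) (theta : seq Sigma -> seq Sigma) k :
  0 < k -> (forall a b : Sigma, a = b \/ [:: a] = theta [:: b]) ->
  ~ exists x : nat -> Sigma, pseudo_kth_power_free theta k x.
Proof.
move=> k_gt0 letters [x x_free]; apply: (x_free 0 k); split.
  by rewrite /factor; case: (k) k_gt0.
exists (mkseq (fun j => [:: x j]) k); rewrite size_mkseq; split=> //; split.
  by rewrite /factor /mkseq; elim: (iota 0 k) => //= j s ->.
move=> i j lt_ik lt_jk; rewrite !nth_mkseq //.
by case: (letters (x i) (x j)) => [->|]; [left | right].
Qed.


Definition word_over A (w : seq nat) := all (fun c => c < A) w.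
Definition morph (g : nat -> seq nat) w := flatten (map g w).

Lemma morph_cat g u v : morph g (u ++ v) = morph g u ++ morph g v.
Proof. by rewrite /morph map_cat flatten_cat. Qed.

Lemma morph_cons g c w : morph g (c :: w) = g c ++ morph g w.
Proof. by []. Qed.

Lemma prefix_morph g u v : prefix u v -> prefix (morph g u) (morph g v).
Proof. by case/prefixP=> r ->; rewrite morph_cat prefix_prefix. Qed.

Lemma word_over_block A w j n : word_over A w -> word_over A (block w j n).
Proof.
rewrite /word_over /block -{1}(cat_take_drop j w) all_cat => /andP[_].
by rewrite -{1}(cat_take_drop n (drop j w)) all_cat => /andP[].
Qed.

Lemma word_over_drop A w j : word_over A w -> word_over A (drop j w).
Proof. by rewrite /word_over -{1}(cat_take_drop j w) all_cat => /andP[]. Qed.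

Lemma word_over_morph A B g w : all (fun c => word_over B (g c)) (iota 0 A) ->
  word_over A w -> word_over B (morph g w).
Proof.
move=> /allP g_over; elim: w => //= c w IHw /andP[lt_cA w_over].
by rewrite morph_cons /word_over all_cat -!/(word_over _ _) g_over ?mem_iota // IHw.
Qed.

Lemma nth_word_over A w j : word_over A w -> j < size w -> nth 0 w j < A.
Proof. by move=> /allP w_over lt_jw; apply/w_over/mem_nth. Qed.

Fixpoint words A n :=
  if n is n'.+1 then [seq c :: w | c <- iota 0 A, w <- words A n'] else [:: [::]].
Definition squarefree_words A N :=
  [seq w <- flatten [seq words A n | n <- iota 0 N.+1] | squarefree w].

Lemma mem_words A w : word_over A w -> w \in words A (size w).
Proof.
elim: w => [|c w IHw] /=; first by rewrite inE.
by case/andP=> lt_cA /IHw w_in; apply/allpairsP; exists (c, w); rewrite mem_iota.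
Qed.

Lemma mem_squarefree_words A N w :
  word_over A w -> size w <= N -> squarefree w -> w \in squarefree_words A N.
Proof.
move=> w_over le_wN sqf; rewrite mem_filter sqf; apply/flattenP.
by exists (words A (size w)); [apply: map_f; rewrite mem_iota | apply: mem_words].
Qed.

Lemma block_mem_squarefree_words A N w j :
  word_over A w -> squarefree w -> block w j N \in squarefree_words A N.
Proof.
move=> w_over sqf; apply: mem_squarefree_words; first exact: word_over_block.
  by rewrite size_block geq_minl.
exact: squarefree_block.
Qed.

(* Resolves a square whose period is a multiple of L but which starts strictly
   inside an image block. *)
Definition split_rigid (g : nat -> seq nat) A L :=
  all (fun s => all (fun a => all (fun b => all (fun c =>
    [&& drop s (g a) == drop s (g b) & take s (g b) == take s (g c)] ==> (a == b) || (b == c))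
  (iota 0 A)) (iota 0 A)) (iota 0 A)) (iota 1 L.-1).

(* [synchronizing g A L S N]: in the images of square-free words of length at most
   N, equal factors of length S start at positions congruent modulo L.  When
   L + S <= N * L, every factor of length S of the image of any square-free word
   lies in such a short image, so the property holds for all of them. *)
Definition windows g A L S N :=
  [seq (o, block (morph g v) o S) | v <- squarefree_words A N,
                                    o <- [seq o <- iota 0 L | o + S <= size (morph g v)]].
Definition synchronizing g A L S N :=
  let W := windows g A L S N in all (fun x => all (fun y => (x.2 == y.2) ==> (x.1 == y.1)) W) W.

Section UniformMorphism.
Variables (g : nat -> seq nat) (A L : nat).
Hypothesis L_gt0 : 0 < L.
Hypothesis g_uniform : all (fun c => size (g c) == L) (iota 0 A).
Hypothesis g_injective : uniq (map g (iota 0 A)).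

Lemma size_g c : c < A -> size (g c) = L.
Proof. by move=> lt_cA; apply/eqP/(allP g_uniform); rewrite mem_iota. Qed.

Lemma g_inj a b : a < A -> b < A -> g a = g b -> a = b.
Proof.
move=> lt_aA lt_bA eq_g; apply/eqP.
rewrite -(nth_uniq [::] _ _ g_injective) ?size_map ?size_iota //.
by rewrite !(nth_map 0) ?size_iota // !nth_iota // eq_g.
Qed.

Lemma size_morph w : word_over A w -> size (morph g w) = size w * L.
Proof.
elim: w => //= c w IHw /andP[lt_cA /IHw].
by rewrite size_cat size_g // => ->; rewrite mulSn.
Qed.

Lemma drop_morph w j : word_over A w -> drop (j * L) (morph g w) = morph g (drop j w).
Proof.
elim: w j => [|c w IHw] [|j] //= /andP[lt_cA w_over]; first by rewrite mul0n drop0.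
by rewrite mulSn addnC -drop_drop drop_size_cat ?size_g // IHw.
Qed.

Lemma take_morph w j : word_over A w -> take (j * L) (morph g w) = morph g (take j w).
Proof.
elim: w j => [|c w IHw] [|j] //= /andP[lt_cA w_over]; first by rewrite mul0n take0.
by rewrite mulSn take_cat size_g // ltnNge leq_addr /= addKn IHw.
Qed.

Lemma block_morph w j m : word_over A w ->
  block (morph g w) (j * L) (m * L) = morph g (block w j m).
Proof. by move=> w_over; rewrite /block drop_morph // take_morph // word_over_drop. Qed.

Lemma morph_inj u v : word_over A u -> word_over A v -> size u = size v ->
  morph g u = morph g v -> u = v.
Proof.
elim: u v => [|a u IHu] [|b v] //= /andP[lt_aA u_over] /andP[lt_bA v_over] [size_uv].
move/eqP; rewrite eqseq_cat ?size_g // => /andP[/eqP/g_inj eq_ab /eqP/IHu ->] //.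
by rewrite eq_ab.
Qed.

Lemma block_morph_local w q n N : word_over A w -> q %% L + n <= N * L ->
  block (morph g w) q n = block (morph g (block w (q %/ L) N)) (q %% L) n.
Proof.
move=> w_over fits; rewrite {1}(divn_eq q L) -block_drop drop_morph // /block.
by rewrite -take_morph ?word_over_drop // -/(block (take _ _) _ _) block_take.
Qed.

Hypothesis g_rigid : split_rigid g A L.

Lemma rigid_split a b c s : a < A -> b < A -> c < A -> 0 < s < L ->
  drop s (g a) = drop s (g b) -> take s (g b) = take s (g c) -> a = b \/ b = c.
Proof.
move=> lt_aA lt_bA lt_cA /andP[s_gt0 lt_sL] eq_drop eq_take.
have in_A x : x < A -> x \in iota 0 A by rewrite mem_iota.
have in_s : s \in iota 1 L.-1 by rewrite mem_iota; lia.
move: g_rigid => /allP/(_ s in_s)/allP/(_ a (in_A _ lt_aA)).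
move=> /allP/(_ b (in_A _ lt_bA))/allP/(_ c (in_A _ lt_cA)).
by rewrite eq_drop eq_take !eqxx /= => /orP[]/eqP; [left | right].
Qed.

Lemma block_morph_offset w j m s : word_over A w -> s < L -> j + m.+1 < size w ->
  block (morph g w) (j * L + s) (m.+1 * L) =
  drop s (g (nth 0 w j)) ++ morph g (block w j.+1 m) ++ take s (g (nth 0 w (j + m.+1))).
Proof.
move=> w_over lt_sL fits.
have u_over : word_over A (drop j.+1 w) by exact: word_over_drop.
have a_over : nth 0 w j < A by apply: nth_word_over => //; lia.
have b_over : nth 0 w (j + m.+1) < A by apply: nth_word_over.
rewrite -block_drop drop_morph // (drop_nth 0) ?morph_cons; last lia.
rewrite /block drop_cat size_g // lt_sL take_cat size_drop size_g // mulSn.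
rewrite (_ : (L + m * L < L - s) = false); last by apply/negbTE; rewrite -leqNgt; lia.
rewrite (_ : L + m * L - (L - s) = m * L + s); last lia.
rewrite takeD take_morph // drop_morph // (@drop_nth _ 0 m); last by rewrite size_drop; lia.
by rewrite morph_cons nth_drop addSnnS takel_cat // size_g //; exact: ltnW.
Qed.

Variables S N : nat.
Hypothesis S_gt0 : 0 < S.
Hypothesis g_sync : synchronizing g A L S N.

Lemma synchronization w q q' : L + S <= N * L -> word_over A w -> squarefree w ->
  q + S <= size (morph g w) -> q' + S <= size (morph g w) ->
  block (morph g w) q S = block (morph g w) q' S -> q %% L = q' %% L.
Proof.
move=> N_large w_over sqf fit fit' eq_blocks.
have window_in p : p + S <= size (morph g w) ->
    (p %% L, block (morph g w) p S) \in windows g A L S N.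
  move=> fit_p; set v := block w (p %/ L) N.
  have lt_pL := ltn_pmod p L_gt0.
  have local : block (morph g w) p S = block (morph g v) (p %% L) S.
    by apply: block_morph_local => //; lia.
  have := size_block (morph g w) p S; rewrite local size_block => size_local.
  apply/allpairsPdep; exists v, (p %% L); split=> //.
    exact: block_mem_squarefree_words.
  by rewrite mem_filter mem_iota lt_pL /= andbT; lia.
have /allP/(_ _ (window_in q fit))/allP/(_ _ (window_in q' fit')) := g_sync.
by rewrite /= eq_blocks eqxx => /eqP.
Qed.

Lemma square_period_dvd w i p : L + S <= N * L -> word_over A w -> squarefree w ->
  S <= p -> square_at (morph g w) i p -> L %| p.
Proof.
move=> N_large w_over sqf le_Sp; rewrite square_atE => /and3P[_ fits /eqP halves].
have same_mod : i %% L = (i + p) %% L.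
  apply: (synchronization N_large w_over sqf); try by apply: leq_trans fits; lia.
  by rewrite -(take_block _ _ le_Sp) halves take_block.
by move/eqP: same_mod; rewrite -{1}[i]addn0 eqn_modDl mod0n eq_sym.
Qed.

Lemma square_of_aligned w j m : word_over A w -> 0 < m -> j + m + m <= size w ->
  block (morph g w) (j * L) (m * L) = block (morph g w) ((j + m) * L) (m * L) ->
  square_at w j m.
Proof.
move=> w_over m_gt0 fits; rewrite !block_morph // => eq_morph.
have size_blocks : size (block w j m) = size (block w (j + m) m) by rewrite !size_block; lia.
rewrite square_atE m_gt0 fits (morph_inj _ _ size_blocks eq_morph) ?eqxx //; exact: word_over_block.
Qed.

Lemma square_of_offset w j m s : word_over A w -> 0 < s < L -> j + m.+1 + m.+1 < size w ->
  block (morph g w) (j * L + s) (m.+1 * L) =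
    block (morph g w) ((j + m.+1) * L + s) (m.+1 * L) ->
  square_at w j m.+1 || square_at w j.+1 m.+1.
Proof.
move=> w_over s_range fits; have [s_gt0 lt_sL] := andP s_range.
have over k : k < size w -> nth 0 w k < A by exact: nth_word_over.
rewrite !block_morph_offset //; try lia.
move/eqP; rewrite eqseq_cat; last by rewrite !size_drop !size_g // over; lia.
case/andP=> /eqP eq_ab; rewrite eqseq_cat; last first.
  by rewrite !size_morph ?word_over_block // !size_block; lia.
case/andP=> /eqP/morph_inj eq_mid /eqP eq_bc.
have {}eq_mid : block w j.+1 m = block w (j + m.+1).+1 m.
  by apply: eq_mid; rewrite ?word_over_block // !size_block; lia.
have [a_over b_over c_over] : [/\ nth 0 w j < A, nth 0 w (j + m.+1) < A
                                 & nth 0 w (j + m.+1 + m.+1) < A] by split; apply: over; lia.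
have [eq_ab' | eq_bc'] := rigid_split a_over b_over c_over s_range eq_ab eq_bc.
  by rewrite square_atE (ltnW fits) !(block_cons 0) ?eq_ab' ?eq_mid ?eqxx //; lia.
apply/orP; right; rewrite square_atE (_ : j.+1 + m.+1 + m.+1 <= size w); last lia.
rewrite !(block_rcons 0) ?[j.+1 + m]addSnnS ?[j.+1 + m.+1]addSn ?addSnnS; try lia.
by rewrite eq_mid eq_bc' eqxx.
Qed.

Lemma long_square_free w i p : L + S <= N * L -> word_over A w -> squarefree w ->
  S <= p -> ~~ square_at (morph g w) i p.
Proof.
move=> N_large w_over sqf le_Sp; apply/negP=> sq.
have /dvdnP[m p_eq] := square_period_dvd N_large w_over sqf le_Sp sq.
move: sq; rewrite square_atE size_morph // => /and3P[p_gt0 fits /eqP halves].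
have m_gt0 : 0 < m by move: p_gt0; rewrite p_eq muln_gt0 => /andP[].
move: fits halves; rewrite (divn_eq i L) p_eq -(prednK m_gt0).
set j := i %/ L; set s := i %% L; set n := m.-1; move=> fits halves.
have /squarefreeP nosq := sqf.
case: (posnP s) => [s0 | s_gt0].
  move: fits halves; rewrite s0 !addn0 -mulnDl => fits halves.
  move/negP: (nosq j n.+1); apply; apply: square_of_aligned => //.
  by rewrite -(leq_pmul2r L_gt0) mulnDl.
have fits' : j + n.+1 + n.+1 < size w by rewrite -(ltn_pmul2r L_gt0) !mulnDl; lia.
rewrite -addnA (addnC s) addnA -mulnDl in halves.
have s_range : 0 < s < L by rewrite s_gt0 ltn_pmod.
by case/orP: (square_of_offset w_over s_range fits' halves); apply/negP.
Qed.

Lemma squarefree_morph w : L + 2 * S <= N * L ->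
  all (fun v => squarefree (morph g v)) (squarefree_words A N) ->
  word_over A w -> squarefree w -> squarefree (morph g w).
Proof.
move=> N_large short w_over sqf; apply/squarefreeP=> i p; apply/negP=> sq.
have [le_Sp | lt_pS] := leqP S p.
  by move: sq; apply/negP; apply: long_square_free => //; lia.
have [p_gt0 fits] := square_at_fits sq.
have := allP short _ (@block_mem_squarefree_words A N w (i %/ L) w_over sqf).
move/squarefreeP/(_ (i %% L) p)/negP; apply; move: sq.
by rewrite /square_at (@block_morph_local w _ _ N w_over) //; have := ltn_pmod i L_gt0; lia.
Qed.

Lemma pseudo_fourth_free_morph f w : L + 4 * S <= N * L ->
  all (fun v => pseudo_fourth_free f (morph g v)) (squarefree_words A N) ->
  word_over A w -> squarefree w -> pseudo_fourth_free f (morph g w).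
Proof.
move=> N_large short w_over sqf; apply/pseudo_fourth_freeP=> i m; apply/negP=> pf.
have [le_Sm | lt_mS] := leqP S m.
  have [i' [p /andP[le_mp sq]]] := pseudo_fourth_square pf.
  by move: sq; apply/negP; apply: long_square_free => //; lia.
have [m_gt0 fits] := pseudo_fourth_at_fits pf.
have := allP short _ (@block_mem_squarefree_words A N w (i %/ L) w_over sqf).
move/pseudo_fourth_freeP/(_ (i %% L) m)/negP; apply; move: pf.
by rewrite /pseudo_fourth_at (@block_morph_local w _ _ N w_over) //; have := ltn_pmod i L_gt0; lia.
Qed.

End UniformMorphism.

Section PrefixLimit.
Variable F : nat -> seq nat.
Hypothesis F_prefix : forall K, prefix (F K) (F K.+1).
Hypothesis F_size : forall K, K < size (F K).

Definition limit n := nth 0 (F n.+1) n.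

Lemma prefix_chain K K' : K <= K' -> prefix (F K) (F K').
Proof.
move=> le_KK'; rewrite -(subnKC le_KK'); elim: (K' - K) => [|d IHd].
  by rewrite addn0 prefix_refl.
by rewrite addnS; apply: prefix_trans IHd (F_prefix _).
Qed.

Lemma nth_limit K n : n < size (F K) -> limit n = nth 0 (F K) n.
Proof.
have nth_prefix u v : prefix u v -> n < size u -> nth 0 v n = nth 0 u n.
  by case/prefixP=> r -> lt_nu; rewrite nth_cat lt_nu.
move=> lt_nF; rewrite /limit; have [le_K | le_n] := leqP K n.+1.
  exact: nth_prefix (prefix_chain le_K) lt_nF.
by rewrite (nth_prefix _ _ (prefix_chain (ltnW le_n))) // ltnW ?F_size.
Qed.

Lemma factor_limit i n : factor limit i n = block (F (i + n)) i n.
Proof.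
have lt_F := F_size (i + n).
apply: (@eq_from_nth _ 0); first by rewrite size_mkseq size_block; lia.
move=> t; rewrite size_mkseq => lt_tn; rewrite nth_mkseq // /block nth_take // nth_drop.
by apply: nth_limit; lia.
Qed.

End PrefixLimit.

Definition leech (c : nat) : seq nat :=
  match c with
  | 0 => [:: 0; 1; 2; 1; 0; 2; 1; 2; 0; 1; 2; 1; 0]
  | 1 => [:: 1; 2; 0; 2; 1; 0; 2; 0; 1; 2; 0; 2; 1]
  | _ => [:: 2; 0; 1; 0; 2; 1; 0; 1; 2; 0; 1; 0; 2]
  end.

Definition leech_word K := iter K (morph leech) [:: 0].

Lemma leech_word_over K : word_over 3 (leech_word K).
Proof. by elim: K => //= K; apply: word_over_morph; vm_compute. Qed.

Lemma squarefree_leech_word K : squarefree (leech_word K).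
Proof.
elim: K => [|K IHK]; first by vm_compute.
apply: (@squarefree_morph leech 3 13 isT _ _ _ 8 3 isT _ _ _ _ (leech_word_over K) IHK);
  by vm_compute.
Qed.

Lemma prefix_leech_word K : prefix (leech_word K) (leech_word K.+1).
Proof. by elim: K => [|K IHK]; [vm_compute | apply: prefix_morph]. Qed.

Lemma size_leech_word K : K < size (leech_word K).
Proof.
have size13 : size (leech_word K) = 13 ^ K.
  elim: K => // K IHK; rewrite /leech_word iterS -/(leech_word K).
  by rewrite (@size_morph leech 3 13 isT _ (leech_word_over K)) IHK expnS mulnC.
by rewrite size13 ltn_expl.
Qed.

Definition mirror_code (c : nat) : seq nat :=
  match c with
  | 0 => [:: 0; 0; 0; 1; 0]
  | 1 => [:: 0; 0; 1; 0; 1]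
  | _ => [:: 0; 0; 1; 1; 1]
  end.

Definition mirror_word K := morph mirror_code (leech_word K).

Lemma mirror_word_over K : word_over 2 (mirror_word K).
Proof. by apply: word_over_morph (leech_word_over K); vm_compute. Qed.

Lemma mirror_word_free K : pseudo_fourth_free rev (mirror_word K).
Proof.
apply: (@pseudo_fourth_free_morph mirror_code 3 5 isT _ _ _ 8 8 isT _ _ _ _ _
          (leech_word_over K) (squarefree_leech_word K)); by vm_compute.
Qed.

Lemma prefix_mirror_word K : prefix (mirror_word K) (mirror_word K.+1).
Proof. exact/prefix_morph/prefix_leech_word. Qed.

Lemma size_mirror_word K : K < size (mirror_word K).
Proof.
rewrite /mirror_word (@size_morph mirror_code 3 5 isT _ (leech_word_over K)).
by apply: leq_trans (size_leech_word K) _; rewrite leq_pmulr.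
Qed.

Lemma factor_comp (T T' : Type) (f : T -> T') (x : nat -> T) i n :
  factor (f \o x) i n = map f (factor x i n).
Proof. by rewrite /factor /mkseq -map_comp. Qed.

Lemma finite_coding (Sigma : finType) n (y : nat -> nat) :
  n <= #|Sigma| -> (forall t, y t < n) ->
  exists (x : nat -> Sigma) (d : Sigma -> nat), forall i m, map d (factor x i m) = factor y i m.
Proof.
move=> le_n y_lt; have [x0 _] : exists x0 : Sigma, x0 \in Sigma.
  by apply/card_gt0P; apply: leq_trans le_n; apply: leq_ltn_trans (y_lt 0).
exists (fun t => nth x0 (enum Sigma) (y t)), (index^~ (enum Sigma)) => i m.
rewrite -factor_comp; apply: eq_mkseq => j /=.
by rewrite index_uniq ?enum_uniq // -cardE; apply: leq_trans (y_lt _) le_n.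
Qed.

Lemma pseudo_power_free_three_letters (Sigma : finType) theta k :
  3 <= #|Sigma| -> antimorphic_involution theta -> 4 <= k ->
  exists x : nat -> Sigma, pseudo_kth_power_free theta k x.
Proof.
move=> card3 theta_inv k_ge4.
have y_lt t : limit leech_word t < 3.
  exact: nth_word_over (leech_word_over _) (ltnW (size_leech_word _)).
have [x [d code]] := finite_coding card3 y_lt.
exists x => i n /(pseudo_power_square theta_inv k_ge4) [i' [p /(square_at_map d)]].
rewrite code (factor_limit prefix_leech_word size_leech_word) => /square_at_block.
by apply/negP; move/squarefreeP: (squarefree_leech_word (i + n)).
Qed.

Lemma pseudo_power_free_rev (Sigma : finType) k : 2 <= #|Sigma| -> 4 <= k ->
  exists x : nat -> Sigma, pseudo_kth_power_free (@rev Sigma) k x.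
Proof.
move=> card2 k_ge4.
have y_lt t : limit mirror_word t < 2.
  exact: nth_word_over (mirror_word_over _) (ltnW (size_mirror_word _)).
have [x [d code]] := finite_coding card2 y_lt.
exists x => i n /(pseudo_power_rev_fourth k_ge4) [m /(pseudo_fourth_at_map_rev d)].
rewrite code (factor_limit prefix_mirror_word size_mirror_word) => /pseudo_fourth_at_block.
by apply/negP; move/pseudo_fourth_freeP: (mirror_word_free (i + n)).
Qed.

Lemma rev_map_antimorphic_involution (T : Type) (sigma : T -> T) :
  involutive sigma -> antimorphic_involution (fun w => rev (map sigma w)).
Proof.
move=> sigmaK; split=> [u v | w]; first by rewrite map_cat rev_cat.
by rewrite map_rev revK -map_comp (eq_map sigmaK) map_id.
Qed.

Lemma two_letter_swap (Sigma : finType) : #|Sigma| = 2 ->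
  exists sigma : Sigma -> Sigma, involutive sigma /\ forall a b, a = b \/ a = sigma b.
Proof.
move=> card2; have : size (enum Sigma) = 2 by rewrite -cardE.
have enum_all y : y \in enum Sigma by rewrite mem_enum.
case: (enum Sigma) (enum_uniq Sigma) enum_all => [|a [|b []]] //=.
rewrite inE andbT => neq_ab all_ab _.
have ab y : y = a \/ y = b by move: (all_ab y); rewrite !inE => /orP[]/eqP; [left | right].
have neq_ba : (b == a) = false by rewrite eq_sym (negbTE neq_ab).
exists (fun y => if y == a then b else a); split.
  by move=> y; case: (ab y) => ->; rewrite ?eqxx ?neq_ba ?eqxx.
by move=> x y; case: (ab x) (ab y) => -> [] ->; rewrite ?eqxx ?neq_ba; auto.
Qed.

Theorem mainTheorem3 (k : nat) (hk : 4 <= k) (Sigma : finType) :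
  (#|Sigma| <= 1 ->
     forall theta : seq Sigma -> seq Sigma, antimorphic_involution theta ->
       ~ (exists x : nat -> Sigma, pseudo_kth_power_free theta k x)) /\
  (3 <= #|Sigma| ->
     forall theta : seq Sigma -> seq Sigma, antimorphic_involution theta ->
       exists x : nat -> Sigma, pseudo_kth_power_free theta k x) /\
  (#|Sigma| = 2 ->
     exists theta1 theta2 : seq Sigma -> seq Sigma,
       antimorphic_involution theta1 /\ antimorphic_involution theta2 /\
       (exists x : nat -> Sigma, pseudo_kth_power_free theta1 k x) /\
       ~ (exists x : nat -> Sigma, pseudo_kth_power_free theta2 k x)).
Proof.
split; [|split].
- move=> card_le1 theta _; apply: no_pseudo_power_free_word; first lia.
  by move=> a b; left; apply: (fintype_le1P card_le1).
- by move=> card3 theta theta_inv; apply: pseudo_power_free_three_letters.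
- move=> card2; have [sigma [sigmaK swap]] := two_letter_swap card2.
  exists (@rev Sigma), (fun w => rev (map sigma w)).
  split; first exact: rev_antimorphic_involution.
  split; first exact: rev_map_antimorphic_involution.
  split; first by apply: pseudo_power_free_rev => //; rewrite card2.
  apply: no_pseudo_power_free_word; first lia.
  by move=> a b; case: (swap a b) => ->; [left | right].
Qed.
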